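(* Let $f$ be a four times continuously differentiable convex function on $[0,\infty)$ with $f(1)=1$, and let $g(x)=x^2f''(x)$. Suppose $g\ge 0$ on $[0,\infty)$ and $x^2g''(x)-g(\alpha)\,g(x/\alpha)\le 0$ for all $x\ge0$ and all $\alpha>0$. Then for all finite sets $\mathcal{Y},\mathcal{Z}$ and all distributions $q_Y\ll r_Y$ on $\mathcal{Y}$, $q_Z\ll r_Z$ on $\mathcal{Z}$, $$D_f(q_Yq_Z\|r_Yr_Z)\le D_f(q_Y\|r_Y)\,D_f(q_Z\|r_Z).$$ Equivalently, with $\hat f=f-1$, $\log(1+D_{\hat f}(q_Yq_Z\|r_Yr_Z))\le \log(1+D_{\hat f}(q_Y\|r_Y))+\log(1+D_{\hat f}(q_Z\|r_Z))$.
   Context: For distributions $p\ll q$ on a finite set and any function $f$ on $[0,\infty)$, $D_f(p\|q)=\sum_x q(x) f(p(x)/q(x))$ with the convention $0f(0/0)=0$. *)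

From HB Require Import structures.
From mathcomp Require Import all_boot all_order all_algebra.
From mathcomp Require Import all_classical all_reals all_analysis.
Set Implicit Arguments. Unset Strict Implicit. Unset Printing Implicit Defensive.
Import Order.TTheory GRing.Theory Num.Theory.
Import numFieldNormedType.Exports.
Local Open Scope classical_set_scope.
Local Open Scope ring_scope.

Section Defs.
Variable R : realType.

(* F' is the derivative of F on [0, +oo): two-sided in the interior,
   right derivative at 0 (difference quotients taken within [0, +oo)). *)
Definition deriv_on_nonneg (F F' : R -> R) : Prop :=
  forall x : R, 0 <= x ->
    (fun h : R => (F (x + h) - F x) / h)
      @ within [set h : R | h != 0 /\ 0 <= x + h] (nbhs (0:R)) --> F' x.

Definition C4_nonneg (f : R -> R) : Prop :=
  exists f1 f2 f3 f4 : R -> R,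
    [/\ deriv_on_nonneg f f1, deriv_on_nonneg f1 f2, deriv_on_nonneg f2 f3,
        deriv_on_nonneg f3 f4 & {within [set x : R | 0 <= x], continuous f4}].

Definition convex_nonneg (f : R -> R) : Prop :=
  forall x y t : R, 0 <= x -> 0 <= y -> 0 <= t <= 1 ->
    f ((1 - t) * x + t * y) <= (1 - t) * f x + t * f y.

Definition is_distr (T : finType) (p : T -> R) : Prop :=
  (forall x, 0 <= p x) /\ \sum_(x : T) p x = 1.

Definition abs_cont (T : finType) (p q : T -> R) : Prop :=
  forall x, q x = 0 -> p x = 0.

(* D_f(p || q) = sum_x q(x) f(p(x)/q(x)), with 0 f(0/0) = 0. *)
Definition fdiv (f : R -> R) (T : finType) (p q : T -> R) : R :=
  \sum_(x : T | q x != 0) q x * f (p x / q x).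

Definition prod_distr (Y Z : finType) (p : Y -> R) (q : Z -> R) : (Y * Z)%type -> R :=
  fun yz => p yz.1 * q yz.2.

End Defs.

From HB Require Import structures.
From mathcomp Require Import all_boot all_order all_algebra.
From mathcomp Require Import all_classical all_reals all_analysis.
From mathcomp Require Import ring lra.
Import Order.TTheory GRing.Theory Num.Theory.
Import numFieldNormedType.Exports.
Local Open Scope classical_set_scope.
Local Open Scope ring_scope.

(* Write D_H(q, r) for fdiv H q r and g(y) = y^2 f''(y).  The only tool is Jensen's
   inequality for f-divergences in tangent-line form: if H is convex on [0, +oo) then
   H(1) <= D_H(q, r), because D_H(q, r) = u + v when H is the affine map a |-> u + v a.
   First, for t > 0 the map s |-> g(t) f(s) - g(t s) is convex: s^2 times its second
   derivative is g(t) g(s) - (t s)^2 g''(t s) >= 0 by the hypothesis at x = t s, alpha = s.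
   Jensen gives D_{g(. t)}(q_Y, r_Y) <= g(t) D_f(q_Y, r_Y).
   Second, psi(t) = D_f(q_Y, r_Y) f(t) - D_{f(. t)}(q_Y, r_Y) vanishes at 1 and satisfies
   t^2 psi''(t) = g(t) D_f(q_Y, r_Y) - D_{g(. t)}(q_Y, r_Y) >= 0, so Jensen over Z gives
   0 <= D_psi(q_Z, r_Z) = D_f(q_Y, r_Y) D_f(q_Z, r_Z) - D_f(q_Y q_Z, r_Y r_Z). *)

Section fdiv_submultiplicativity.
Local Set Implicit Arguments.
Local Unset Strict Implicit.
Variable R : realType.
Implicit Types (F G dF : R -> R) (c : R).

Definition deriv_on_pos F dF := forall x : R, 0 < x -> is_derive x 1 F (dF x).

Lemma deriv_on_nonneg_pos F dF : deriv_on_nonneg F dF -> deriv_on_pos F dF.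
Proof.
move=> F_deriv x x0.
have dFx : (fun h => (F (x + h) - F x) / h) @ 0^' --> dF x.
  apply: cvg_trans (F_deriv x (ltW x0)); apply: cvg_app => P /=.
  rewrite /within /= !near_simpl => PA.
  have xh : \forall h \near 0, 0 <= x + h.
    by near=> h; rewrite -lerBlDl sub0r ltW//; near: h; apply: lt_nbhsr; rewrite oppr_lt0.
  by move: PA; apply: filter_app2 xh; near=> h => xh PA h0; apply: PA.
have E : (fun h => h^-1 *: ((F \o shift x) (h *: 1) - F x)) =
         (fun h => (F (x + h) - F x) / h).
  apply/funext => h; change (h^-1 * (F (h * 1 + x) - F x) = (F (x + h) - F x) / h).
  by rewrite mulr1 mulrC (addrC h).
apply: DeriveDef; rewrite /derivable /derive E; first by apply/cvg_ex; exists (dF x).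
exact: cvg_lim.
Unshelve. all: by end_near. Qed.

Lemma deriv_on_nonneg_cvg0 F dF : deriv_on_nonneg F dF -> F @ 0^'+ --> F 0.
Proof.
move=> /(_ 0 (lexx 0)) dF0.
have Q0 : (fun h => (F (0 + h) - F 0) / h) @ 0^'+ --> dF 0.
  apply: cvg_trans dF0; apply: cvg_app; apply: within_subset => h /= h0.
  by rewrite gt_eqF// add0r ltW.
have -> : F 0 = F 0 + 0 * dF 0 by rewrite mul0r addr0.
have id_cvg0 : id @ 0^'+ --> (0 : R) by apply: cvg_at_right_filter; exact: cvg_id.
apply: cvg_trans (cvgD (cvg_cst (F 0)) (cvgM id_cvg0 Q0)).
apply: near_eq_cvg; near=> h.
have h0 : 0 < h by near: h; exact: nbhs_right_gt.
change (F 0 + h * ((F (0 + h) - F 0) / h) = F h).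
by rewrite add0r mulrC divfK ?gt_eqF// addrC subrK.
Unshelve. all: by end_near. Qed.

Lemma cvg0_scale F c : 0 <= c -> F @ 0^'+ --> F 0 ->
  (fun s => F (c * s)) @ 0^'+ --> F 0.
Proof.
rewrite le_eqVlt => /predU1P[<- _|c0 F0].
  by under eq_fun do rewrite mul0r; exact: cvg_cst.
have := @increasing_cvg_at_right_comp R (fun s => c * s) F 0 (BInfty _ false) (F 0).
rewrite mulr0; apply => //.
- by move=> x y _ _ xy; rewrite ltr_pM2l.
- apply: cvg_at_right_filter; rewrite -[X in _ --> X](mulr0 c).
  exact: cvgMl_tmp cvg_id.
Qed.

Lemma deriv_on_pos_scale F dF c : 0 <= c -> deriv_on_pos F dF ->
  deriv_on_pos (fun s => F (c * s)) (fun s => c * dF (c * s)).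
Proof.
rewrite le_eqVlt => /predU1P[<- _ x _|c0 dFpos x x0].
  by under eq_fun do rewrite mul0r; rewrite mul0r; exact: is_derive_cst.
have dFcx := dFpos (c * x) (mulr_gt0 c0 x0).
by apply: is_derive_eq; rewrite -[c%:A]/(c * 1) mulr1 mulrC.
Qed.

Lemma eq_deriv_on_pos F G dF : (forall x, 0 < x -> F x = G x) ->
  deriv_on_pos F dF -> deriv_on_pos G dF.
Proof.
move=> FG dFpos x x0; apply: near_eq_is_derive (dFpos x x0).
by near=> y; apply: FG; near: y; exact: lt_nbhsr.
Unshelve. all: by end_near. Qed.

Lemma derive1_on_pos F dF x : deriv_on_pos F dF -> 0 < x -> derive1 F x = dF x.
Proof. by move=> dFpos /dFpos [_ <-]; rewrite derive1E. Qed.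

Lemma derive1n2_on_pos F dF d2F x : deriv_on_pos F dF -> deriv_on_pos dF d2F ->
  0 < x -> derive1n 2 F x = d2F x.
Proof.
move=> dFpos d2Fpos x0; rewrite derive1nS derive1n1.
apply: derive1_on_pos x0; apply: eq_deriv_on_pos d2Fpos => y y0.
by rewrite (derive1_on_pos dFpos y0).
Qed.

Lemma deriv_on_posZ c F dF : deriv_on_pos F dF ->
  deriv_on_pos (fun x => c * F x) (fun x => c * dF x).
Proof. by move=> dFpos x /dFpos dFx; apply: is_derive_eq; rewrite /GRing.scale /=. Qed.

Lemma deriv_on_pos_sqr_mul F dF : deriv_on_pos F dF ->
  deriv_on_pos (fun y => y ^+ 2 * F y) (fun y => 2 * y * F y + y ^+ 2 * dF y).
Proof.
by move=> dFpos x /dFpos dFx; apply: is_derive_eq; rewrite /GRing.scale /=; ring.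
Qed.

Lemma deriv2_on_pos_sqr_mul F dF d2F : deriv_on_pos F dF -> deriv_on_pos dF d2F ->
  deriv_on_pos (fun y => 2 * y * F y + y ^+ 2 * dF y)
               (fun y => 2 * F y + 4 * y * dF y + y ^+ 2 * d2F y).
Proof.
move=> dFpos d2Fpos x x0; have dFx := dFpos x x0; have d2Fx := d2Fpos x x0.
by apply: is_derive_eq; rewrite /GRing.scale /=; ring.
Qed.

Lemma deriv_on_pos_sum (I : Type) (s : seq I) (P : pred I) (F dF : I -> R -> R) :
  (forall i, P i -> deriv_on_pos (F i) (dF i)) ->
  deriv_on_pos (fun x => \sum_(i <- s | P i) F i x)
               (fun x => \sum_(i <- s | P i) dF i x).
Proof.
move=> dFpos x x0; rewrite -fct_sumE.
elim/big_ind2: _ => [|f1 d1 f2 d2 df1 df2|i Pi]; last exact: dFpos.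
  exact: is_derive_cst.
exact: is_deriveD.
Qed.

Lemma deriv_on_pos_homo F dF : deriv_on_pos F dF -> (forall x, 0 < x -> 0 <= dF x) ->
  forall x y, 0 < x -> x <= y -> F x <= F y.
Proof.
move=> dFpos dF_ge0 x y x0; rewrite le_eqVlt => /predU1P[->//|xy].
have pos z : z \in `]x, y[ -> 0 < z by rewrite in_itv => /andP[/(lt_trans x0)].
rewrite -subr_ge0; have [|z /pos z0 ->] := MVT xy (fun z xyz => dFpos z (pos z xyz)).
  apply: derivable_within_continuous => z; rewrite in_itv /= => /andP[xz _].
  by case: (dFpos z (lt_le_trans x0 xz)).
by rewrite mulr_ge0 ?dF_ge0// subr_ge0 ltW.
Qed.

Lemma continuous_within_nonneg F dF u v : deriv_on_pos F dF -> F @ 0^'+ --> F 0 ->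
  0 <= u -> u < v -> {within `[u, v], continuous F}.
Proof.
move=> dFpos F0; rewrite le_eqVlt => /predU1P[<-|u0] uv.
  apply/continuous_within_itvP => //; split.
  - move=> x; rewrite in_itv /= => /andP[x0 _].
    by apply: differentiable_continuous; apply/derivable1_diffP; case: (dFpos x x0).
  - exact: F0.
  - apply: cvg_at_left_filter; apply: differentiable_continuous.
    by apply/derivable1_diffP; case: (dFpos v uv).
apply: derivable_within_continuous => x; rewrite in_itv /= => /andP[ux _].
by case: (dFpos x (lt_le_trans u0 ux)).
Qed.

Lemma tangent_le F dF d2F b : deriv_on_pos F dF -> deriv_on_pos dF d2F ->
  (forall x, 0 < x -> 0 <= d2F x) -> F @ 0^'+ --> F 0 -> 0 < b ->
  forall a, 0 <= a -> F b + dF b * (a - b) <= F a.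
Proof.
move=> dFpos d2Fpos d2F_ge0 F0 b0 a a0.
have dF_homo := deriv_on_pos_homo d2Fpos d2F_ge0.
have MVT_nonneg u v : 0 <= u -> u < v ->
    exists2 c, 0 < c /\ u < c < v & F v - F u = dF c * (v - u).
  move=> u0 uv; have pos c : c \in `]u, v[ -> 0 < c.
    by rewrite in_itv => /andP[/(le_lt_trans u0)].
  have := continuous_within_nonneg dFpos F0 u0 uv.
  move=> /(MVT uv (fun c uvc => dFpos c (pos c uvc))) [c uvc E].
  by exists c => //; split; [exact: pos | rewrite in_itv in uvc].
case: (ltgtP a b) => [ab|ba|->]; last by rewrite subrr mulr0 addr0.
- have [c [c0 /andP[_ cb]] E] := MVT_nonneg a b a0 ab.
  have : dF c * (b - a) <= dF b * (b - a).
    by apply: ler_wpM2r; [rewrite subr_ge0 ltW | exact: dF_homo (ltW cb)].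
  rewrite -E; lra.
- have [c [_ /andP[bc _]] E] := MVT_nonneg b a (ltW b0) ba.
  have : dF b * (a - b) <= dF c * (a - b).
    by apply: ler_wpM2r; [rewrite subr_ge0 ltW | exact: dF_homo (ltW bc)].
  rewrite -E; lra.
Qed.

Section fdiv_properties.
Variables (T : finType) (q r : T -> R).

Lemma fdivB F G : fdiv (fun s => F s - G s) q r = fdiv F q r - fdiv G q r.
Proof. by rewrite /fdiv -sumrB; apply: eq_bigr => x _; rewrite mulrBr. Qed.

Lemma fdivZ c F : fdiv (fun s => c * F s) q r = c * fdiv F q r.
Proof. by rewrite /fdiv mulr_sumr; apply: eq_bigr => x _; rewrite mulrCA. Qed.

Hypotheses (q_distr : is_distr q) (r_distr : is_distr r) (qr : abs_cont q r).

Let ratio_ge0 (x : T) : 0 <= q x / r x.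
Proof. by rewrite divr_ge0 ?q_distr.1 ?r_distr.1. Qed.

Lemma ler_fdiv F G : (forall a, 0 <= a -> F a <= G a) -> fdiv F q r <= fdiv G q r.
Proof. by move=> FG; apply: ler_sum => x _; rewrite ler_wpM2l ?r_distr.1 ?FG. Qed.

Lemma fdiv_affine u v : fdiv (fun a => u + v * a) q r = u + v.
Proof.
have sum_r : \sum_(x | r x != 0) r x = 1.
  rewrite -r_distr.2 [RHS](bigID (fun x => r x != 0)) /=.
  by rewrite [X in _ + X]big1 ?addr0 // => x /negPn/eqP.
have sum_q : \sum_(x | r x != 0) r x * (q x / r x) = 1.
  rewrite -q_distr.2 [RHS](bigID (fun x => r x != 0)) /=.
  rewrite [X in _ + X]big1 ?addr0 => [|x /negPn/eqP/qr //].
  by apply: eq_bigr => x rx; rewrite mulrC divfK.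
rewrite /fdiv; under eq_bigr do rewrite mulrDr mulrCA.
by rewrite big_split /= -mulr_suml -mulr_sumr sum_r sum_q mul1r mulr1.
Qed.

Lemma fdiv_ge_tangent F c : (forall a, 0 <= a -> F 1 + c * (a - 1) <= F a) ->
  F 1 <= fdiv F q r.
Proof.
move=> F_tangent; have -> : F 1 = fdiv (fun a => F 1 - c + c * a) q r.
  by rewrite fdiv_affine subrK.
by apply: ler_fdiv => a /F_tangent; lra.
Qed.

Lemma deriv_on_pos_fdiv (F dF : R -> R -> R) :
  (forall s, 0 <= s -> deriv_on_pos (F s) (dF s)) ->
  deriv_on_pos (fun t => fdiv (F^~ t) q r) (fun t => fdiv (dF^~ t) q r).
Proof. by move=> dFpos; apply: deriv_on_pos_sum => x _; apply/deriv_on_posZ/dFpos. Qed.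

Lemma cvg0_fdiv_scale F : F @ 0^'+ --> F 0 ->
  (fun t => fdiv (fun s => F (s * t)) q r) @ 0^'+ --> fdiv (fun=> F 0) q r.
Proof.
move=> F0; apply: cvg_big => [|x _]; first exact: add_continuous.
exact: cvgMl_tmp (cvg0_scale (ratio_ge0 x) F0).
Qed.

End fdiv_properties.

Lemma fdiv_prod_distr (Y Z : finType) (f : R -> R) (qY rY : Y -> R) (qZ rZ : Z -> R) :
  fdiv f (prod_distr qY qZ) (prod_distr rY rZ) =
  fdiv (fun t => fdiv (fun s => f (s * t)) qY rY) qZ rZ.
Proof.
rewrite /fdiv /prod_distr (eq_bigl (fun yz => (rY yz.1 != 0) && (rZ yz.2 != 0))); last first.
  by move=> [y z] /=; rewrite mulf_eq0 negb_or.
rewrite -(pair_big_dep (fun y => rY y != 0) (fun _ z => rZ z != 0)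
  (fun y z => rY y * rZ z * f (qY y * qZ z / (rY y * rZ z)))) exchange_big /=.
apply: eq_bigr => z _; rewrite mulr_sumr; apply: eq_bigr => y _.
by rewrite mulf_div mulrCA mulrA.
Qed.

Section submultiplicativity.
Variables (f df d2f dg d2g : R -> R).
Let g y := y ^+ 2 * d2f y.
Hypotheses (f_deriv : deriv_on_pos f df) (df_deriv : deriv_on_pos df d2f).
Hypotheses (f1 : f 1 = 1) (f_cvg0 : f @ 0^'+ --> f 0) (d2f_cvg0 : d2f @ 0^'+ --> d2f 0).
Hypotheses (g_deriv : deriv_on_pos g dg) (dg_deriv : deriv_on_pos dg d2g).
Hypothesis g_ineq : forall x a, 0 < x -> 0 < a -> x ^+ 2 * d2g x <= g a * g (x / a).
Variables (Y : finType) (qY rY : Y -> R).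
Hypotheses (qY_distr : is_distr qY) (rY_distr : is_distr rY) (qrY : abs_cont qY rY).

Let g_cvg0 : g @ 0^'+ --> g 0.
Proof.
have sqr_cvg0 : (fun y : R => y ^+ 2) @ 0^'+ --> (0 : R) ^+ 2.
  by apply: cvg_at_right_filter; exact: exprn_continuous.
exact: cvgM sqr_cvg0 d2f_cvg0.
Qed.

Lemma fdiv_scale_le t : 0 < t -> fdiv (fun s => g (s * t)) qY rY <= g t * fdiv f qY rY.
Proof.
move=> t0; have -> : (fun s => g (s * t)) = (fun s => g (t * s)).
  by apply/funext => s; rewrite mulrC.
pose chi s := g t * f s - g (t * s).
pose dchi s := g t * df s - t * dg (t * s).
pose d2chi s := g t * d2f s - t * (t * d2g (t * s)).
have chi_deriv : deriv_on_pos chi dchi.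
  move=> s s0; have := deriv_on_posZ (g t) f_deriv s0.
  have := deriv_on_pos_scale (ltW t0) g_deriv s0.
  by move=> *; apply: is_derive_eq.
have dchi_deriv : deriv_on_pos dchi d2chi.
  move=> s s0; have := deriv_on_posZ (g t) df_deriv s0.
  have := deriv_on_posZ t (deriv_on_pos_scale (ltW t0) dg_deriv) s0.
  by move=> *; apply: is_derive_eq.
have d2chi_ge0 s : 0 < s -> 0 <= d2chi s.
  move=> s0; rewrite -(pmulr_rge0 _ (exprn_gt0 2 s0)).
  have := g_ineq (mulr_gt0 t0 s0) s0; rewrite mulfK ?gt_eqF//.
  have -> : s ^+ 2 * d2chi s = g s * g t - (t * s) ^+ 2 * d2g (t * s).
    by rewrite /d2chi /g; ring.
  by rewrite subr_ge0.
have chi_cvg0 : chi @ 0^'+ --> chi 0.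
  by rewrite /chi mulr0; apply: cvgB; [exact: cvgMl_tmp | exact: cvg0_scale (ltW t0) g_cvg0].
have := tangent_le chi_deriv dchi_deriv d2chi_ge0 chi_cvg0 ltr01.
move=> /(fdiv_ge_tangent qY_distr rY_distr qrY).
by rewrite /chi fdivB fdivZ f1 !mulr1 subrr subr_ge0.
Qed.

Lemma fdiv_prod_distr_le (Z : finType) (qZ rZ : Z -> R) :
  is_distr qZ -> is_distr rZ -> abs_cont qZ rZ ->
  fdiv f (prod_distr qY qZ) (prod_distr rY rZ) <= fdiv f qY rY * fdiv f qZ rZ.
Proof.
move=> qZ_distr rZ_distr qrZ; set D := fdiv f qY rY.
pose psi t := D * f t - fdiv (fun s => f (s * t)) qY rY.
pose dpsi t := D * df t - fdiv (fun s => s * df (s * t)) qY rY.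
pose d2psi t := D * d2f t - fdiv (fun s => s * (s * d2f (s * t))) qY rY.
have psi_deriv : deriv_on_pos psi dpsi.
  move=> t t0; have := deriv_on_posZ D f_deriv t0.
  have := deriv_on_pos_fdiv qY_distr rY_distr (fun s s0 => deriv_on_pos_scale s0 f_deriv) t0.
  by move=> *; apply: is_derive_eq.
have dpsi_deriv : deriv_on_pos dpsi d2psi.
  move=> t t0; have := deriv_on_posZ D df_deriv t0.
  have := deriv_on_pos_fdiv qY_distr rY_distr
    (fun s s0 => deriv_on_posZ s (deriv_on_pos_scale s0 df_deriv)) t0.
  by move=> *; apply: is_derive_eq.
have d2psi_ge0 t : 0 < t -> 0 <= d2psi t.
  move=> t0; rewrite -(pmulr_rge0 _ (exprn_gt0 2 t0)) mulrBr -fdivZ.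
  have -> : fdiv (fun s => t ^+ 2 * (s * (s * d2f (s * t)))) qY rY =
            fdiv (fun s => g (s * t)) qY rY.
    by apply: eq_bigr => y _; rewrite /g; ring.
  by have := fdiv_scale_le t0; rewrite -/D subr_ge0 /g; lra.
have psi_cvg0 : psi @ 0^'+ --> psi 0.
  have -> : psi 0 = D * f 0 - fdiv (fun=> f 0) qY rY.
    by rewrite /psi; congr (_ - _); apply: eq_bigr => y _; rewrite mulr0.
  by apply: cvgB; [exact: cvgMl_tmp | exact: cvg0_fdiv_scale].
have := tangent_le psi_deriv dpsi_deriv d2psi_ge0 psi_cvg0 ltr01.
move=> /(fdiv_ge_tangent qZ_distr rZ_distr qrZ).
rewrite /psi fdivB fdivZ -fdiv_prod_distr.
have -> : (fun s => f (s * 1)) = f by apply/funext => s; rewrite mulr1.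
by rewrite -/D f1 mulr1 subrr subr_ge0.
Qed.

End submultiplicativity.

End fdiv_submultiplicativity.

Theorem theorem3 (R : realType) (f : R -> R) :
  C4_nonneg f -> convex_nonneg f -> f 1 = 1 ->
  let g := fun x : R => x ^+ 2 * derive1n 2 f x in
  (forall x : R, 0 <= x -> 0 <= g x) ->
  (forall x alpha : R, 0 <= x -> 0 < alpha ->
     x ^+ 2 * derive1n 2 g x - g alpha * g (x / alpha) <= 0) ->
  forall (Y Z : finType) (qY rY : Y -> R) (qZ rZ : Z -> R),
    is_distr qY -> is_distr rY -> abs_cont qY rY ->
    is_distr qZ -> is_distr rZ -> abs_cont qZ rZ ->
    fdiv f (prod_distr qY qZ) (prod_distr rY rZ)
      <= fdiv f qY rY * fdiv f qZ rZ.
Proof.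
move=> [df [d2f [d3f [d4f [f_d df_d d2f_d d3f_d _]]]]] _ f1 g _ g_ineq Y Z qY rY qZ rZ
  qY_distr rY_distr qrY qZ_distr rZ_distr qrZ.
have f_deriv := deriv_on_nonneg_pos f_d; have df_deriv := deriv_on_nonneg_pos df_d.
have d2f_deriv := deriv_on_nonneg_pos d2f_d; have d3f_deriv := deriv_on_nonneg_pos d3f_d.
have gE x : 0 < x -> x ^+ 2 * d2f x = g x.
  by move=> x0; rewrite /g (derive1n2_on_pos f_deriv df_deriv x0).
have g_deriv := deriv_on_pos_sqr_mul d2f_deriv.
have dg_deriv := deriv2_on_pos_sqr_mul d2f_deriv d3f_deriv.
apply: (fdiv_prod_distr_le f_deriv df_deriv f1 (deriv_on_nonneg_cvg0 f_d)
  (deriv_on_nonneg_cvg0 d2f_d) g_deriv dg_deriv _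
  qY_distr rY_distr qrY qZ_distr rZ_distr qrZ) => x a x0 a0.
have := g_ineq x a (ltW x0) a0.
rewrite (derive1n2_on_pos (eq_deriv_on_pos gE g_deriv) dg_deriv x0).
by rewrite subr_le0 -!gE ?divr_gt0.
Qed.
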